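(* Let $S$ be a standard quantum entity on a finite-dimensional complex Hilbert space $\mathcal{H}$. For unit vectors $c,d\in\mathcal{H}$ with corresponding states $p_{\bar c},p_{\bar d}$, we have $p_{\bar c}\perp p_{\bar d}$ if and only if $c\perp d$ (i.e. $\langle c,d\rangle=0$).
   Context: A spectral family of $\mathcal{H}$ is a set $E=\{E_1,\dots,E_r\}$ of pairwise orthogonal nonzero orthogonal projections with $\sum_kE_k=I$. The standard quantum entity on $\mathcal{H}$ has states $p_{\bar c}$, one for each ray $\bar c$ (one-dimensional subspace generated by a unit vector $c$), experiments $e_E$, one for each spectral family $E$, outcomes $x_{E_k}$, one for each orthogonal projection $E_k$, and outcome sets $O(e_E,p_{\bar c})=\{x_{E_k}:E_k\in E,\ E_kc\neq0\}$. State orthogonality: $p\perp q$ iff there is an experiment $e$ with $O(e,p)\cap O(e,q)=\emptyset$. *)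

(* Finite-dimensional complex Hilbert space H = C^n with
   C = R[i] (complex numbers over a realType R), column vectors 'cV[C]_n,
   operators = n x n matrices. *)
From mathcomp Require Import all_boot all_algebra.
From mathcomp Require Import reals complex.
Set Implicit Arguments. Unset Strict Implicit. Unset Printing Implicit Defensive.
Import GRing.Theory Num.Theory.
Local Open Scope ring_scope.

Section QE.
Variables (R : realType) (n : nat).
Local Notation C := (R[i]).

Definition inner (c d : 'cV[C]_n) : C := \sum_(i < n) c i ord0 * (d i ord0)^*.

Definition unit_vector (c : 'cV[C]_n) : Prop := inner c c = 1.

Definition adjoint (A : 'M[C]_n) : 'M[C]_n := map_mx Num.conj A^T.

Definition orth_proj (P : 'M[C]_n) : Prop := P *m P = P /\ adjoint P = P.

Definition spectral_family (E : seq 'M[C]_n) : Prop :=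
  [/\ uniq E,
      forall P, P \in E -> orth_proj P /\ P != 0,
      forall P Q, P \in E -> Q \in E -> P != Q -> P *m Q = 0
    & \sum_(P <- E) P = 1%:M].

(* Outcome set O(e_E, p_c) = { x_{E_k} : E_k in E, E_k c <> 0 };
   the outcome x_{E_k} is identified with the projection E_k itself. *)
Definition outcome_set (E : seq 'M[C]_n) (c : 'cV[C]_n) : 'M[C]_n -> Prop :=
  fun P => P \in E /\ P *m c != 0.

Definition state_orth (c d : 'cV[C]_n) : Prop :=
  exists E, spectral_family E /\
    (forall x, ~ (outcome_set E c x /\ outcome_set E d x)).

End QE.

(* For a spectral family E, writing c = sum_k E_k c and using that each E_k
   is self-adjoint and idempotent gives <c, d> = sum_k <E_k c, E_k d>;
   disjoint outcome sets make every term vanish.  Conversely, if <c, d> = 0,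
   the rank-one projection c c^* and its complement form a spectral family
   in which c and d have disjoint outcome sets. *)

From mathcomp Require Import all_boot all_algebra.
From mathcomp Require Import reals complex.
From mathcomp Require Import sesquilinear spectral.
Import GRing.Theory Num.Theory.
Local Open Scope ring_scope.
Local Open Scope sesquilinear_scope.

Lemma trmxC_mul {C : numClosedFieldType} m p q
    (A : 'M[C]_(m, p)) (B : 'M[C]_(p, q)) :
  (A *m B)^t* = B^t* *m A^t*.
Proof. by rewrite trmx_mul map_mxM. Qed.

Lemma trmxC1 {C : numClosedFieldType} m : (1%:M : 'M[C]_m)^t* = 1%:M.
Proof. by rewrite trmx1 map_mx1. Qed.

Lemma trmxCB {C : numClosedFieldType} m p (A B : 'M[C]_(m, p)) :
  (A - B)^t* = A^t* - B^t*.
Proof. by rewrite linearB map_mxB. Qed.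

Section StandardQuantumEntity.
Variables (R : realType) (n : nat).
Local Notation C := R[i].
Implicit Types (c d : 'cV[C]_n) (P : 'M[C]_n) (E : seq 'M[C]_n).

Lemma adjointE P : adjoint P = P^t*.
Proof. by []. Qed.

Lemma innerE c d : inner c d = (d^t* *m c) 0 0.
Proof. by rewrite /inner mxE; apply: eq_bigr => i _; rewrite !mxE mulrC. Qed.

Lemma inner_conjC c d : inner d c = (inner c d)^*.
Proof.
by rewrite /inner rmorph_sum; apply: eq_bigr => i _; rewrite rmorphM /= conjCK mulrC.
Qed.

Lemma inner0l d : inner 0 d = 0.
Proof. by rewrite innerE mulmx0 mxE. Qed.

Lemma inner0r c : inner c 0 = 0.
Proof. by rewrite inner_conjC inner0l conjC0. Qed.

Lemma inner_suml (I : Type) (s : seq I) (F : I -> 'cV[C]_n) d :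
  inner (\sum_(i <- s) F i) d = \sum_(i <- s) inner (F i) d.
Proof.
by rewrite innerE mulmx_sumr summxE; apply: eq_bigr => i _; rewrite innerE.
Qed.

Lemma unit_vector_neq0 c : unit_vector c -> c != 0.
Proof.
move=> uc; apply/eqP => c0.
by move: uc; rewrite /unit_vector c0 inner0l => /esym/eqP; rewrite oner_eq0.
Qed.

Lemma orth_proj_inner P c d :
  orth_proj P -> inner (P *m c) d = inner (P *m c) (P *m d).
Proof.
move=> [PP aP]; rewrite !innerE trmxC_mul -adjointE aP.
by rewrite -mulmxA (mulmxA P) PP.
Qed.

Lemma inner_spectral_family E c d : spectral_family E ->
  inner c d = \sum_(P <- E) inner (P *m c) (P *m d).
Proof.
case=> _ projE _ sumE.
rewrite -{1}[c]mul1mx -sumE mulmx_suml inner_suml.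
by apply: eq_big_seq => P /projE [projP _]; exact: orth_proj_inner.
Qed.

Lemma state_orth_inner0 c d : state_orth c d -> inner c d = 0.
Proof.
case=> E [famE disjE]; rewrite (inner_spectral_family _ c d famE).
rewrite big_seq big1 // => P PE.
have [->|Pc] := eqVneq (P *m c) 0; first by rewrite inner0l.
have [->|Pd] := eqVneq (P *m d) 0; first by rewrite inner0r.
by case: (disjE P).
Qed.

Lemma orth_proj_compl P : orth_proj P -> orth_proj (1%:M - P).
Proof.
move=> [PP aP]; split; last by rewrite adjointE trmxCB trmxC1 -adjointE aP.
by rewrite mulmxBl mul1mx mulmxBr mulmx1 PP subrr subr0.
Qed.

Lemma spectral_family_compl P : orth_proj P -> P != 0 -> P != 1%:M ->
  spectral_family [:: P; 1%:M - P].
Proof.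
move=> projP P0 P1; have [PP _] := projP.
have PP' : P *m (1%:M - P) = 0 by rewrite mulmxBr mulmx1 PP subrr.
have P'P : (1%:M - P) *m P = 0 by rewrite mulmxBl mul1mx PP subrr.
have P'0 : 1%:M - P != 0 by rewrite subr_eq0 eq_sym.
split.
- by rewrite /= inE andbT; apply: contra_neq P0 => P_eq; rewrite -PP' -P_eq PP.
- by move=> Q; rewrite !inE => /orP[]/eqP->; split=> //; exact: orth_proj_compl.
- by move=> Q Q'; rewrite !inE => /orP[]/eqP-> /orP[]/eqP->; rewrite ?eqxx.
- by rewrite !big_cons big_nil addr0 addrC subrK.
Qed.

Lemma state_orth_proj P c d : orth_proj P -> c != 0 -> d != 0 ->
  P *m c = c -> P *m d = 0 -> state_orth c d.
Proof.
move=> projP c0 d0 Pc Pd.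
have P0 : P != 0 by apply: contra_neq c0 => P0; rewrite -Pc P0 mul0mx.
have P1 : P != 1%:M by apply: contra_neq d0 => P1; rewrite -Pd P1 mul1mx.
exists [:: P; 1%:M - P]; split; first exact: spectral_family_compl.
move=> Q [[]]; rewrite !inE => /orP[]/eqP-> Qc [_ Qd].
- by move: Qd; rewrite Pd eqxx.
- by move: Qc; rewrite mulmxBl mul1mx Pc subrr eqxx.
Qed.

Lemma rank1_mulmx c d : (c *m c^t*) *m d = inner d c *: c.
Proof. by rewrite -mulmxA [c^t* *m d]mx11_scalar -innerE mul_mx_scalar. Qed.

Lemma orth_proj_rank1 c : unit_vector c -> orth_proj (c *m c^t*).
Proof.
move=> uc; split; first by rewrite mulmxA rank1_mulmx uc scale1r.
by rewrite adjointE trmxC_mul trmxCK.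
Qed.

End StandardQuantumEntity.

Theorem mainTheorem15 (R : realType) (n : nat) (c d : 'cV[R[i]]_n) :
  unit_vector c -> unit_vector d ->
  (state_orth c d <-> inner c d = 0).
Proof.
move=> uc ud; split; first exact: state_orth_inner0.
move=> cd0; apply: (@state_orth_proj _ _ (c *m c^t*)).
- exact: orth_proj_rank1.
- exact: unit_vector_neq0.
- exact: unit_vector_neq0.
- by rewrite rank1_mulmx uc scale1r.
- by rewrite rank1_mulmx inner_conjC cd0 conjC0 scale0r.
Qed.
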